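(* Let $(X,\mathcal{R})$ be an imprimitive symmetric association scheme with $6$ classes, cometric with respect to the ordering $E_0,\dots,E_6$, with first multiplicity $m>2$ and Krein array $\{m,m-1,1,b_3^*,b_4^*,1;\ 1,c_2^*,m-b_3^*,1,c_5^*,m\}$, where $a_2^*=a_4^*+a_5^*$. Define polynomials $v_i^*$ by $v_0^*(x)=1$, $v_1^*(x)=x$ and $xv_i^*(x)=c_{i+1}^*v_{i+1}^*(x)+a_i^*v_i^*(x)+b_{i-1}^*v_{i-1}^*(x)$ for $1\le i\le 6$, where one sets $c_7^*=1$. Then $$mc_2^*c_3^*c_5^*v_7^*(x)=\bigl(x^3-a_2^*x^2-(m+c_2^*(m-1))x+ma_2^*-a_5^*c_3^*\bigr)(x^2+c_2^*x-m)(x-m)(x+1).$$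
   Context: A symmetric association scheme with $d$ classes is a pair $(X,\mathcal{R})$, $X$ finite, $\mathcal{R}=\{R_0,\dots,R_d\}$ symmetric relations with adjacency matrices $A_i$ such that $A_0=I$, $\sum_iA_i=J$, and each $A_iA_j$ is a linear combination of the $A_h$. Its primitive idempotents are $E_0=\frac1{|X|}J,E_1,\dots,E_d$, Krein parameters $q_{ij}^h$ are defined by $E_i\circ E_j=\frac{1}{|X|}\sum_hq_{ij}^hE_h$ ($\circ$ entrywise product), $m_i=\mathrm{rank}(E_i)$. Imprimitive means some $(X,R_i)$, $1\le i\le d$, is disconnected. Cometric with respect to $E_0,\dots,E_d$ means $q_{ij}^h=0$ if $i+j<h$ and $q_{ij}^h\ne0$ if $i+j=h$. Then $m=m_1$, $a_i^*=q_{1i}^i$, $b_i^*=q_{1,i+1}^i$, $c_i^*=q_{1,i-1}^i$, with $a_i^*+b_i^*+c_i^*=m$, and the Krein array is $\{b_0^*,\dots,b_{d-1}^*;c_1^*,\dots,c_d^*\}$. In the given situation, $c_3^*=m-b_3^*$ and $a_1^*=a_3^*=a_6^*=0$. *)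

From HB Require Import structures.
From mathcomp Require Import all_boot all_order all_algebra.
Set Implicit Arguments. Unset Strict Implicit. Unset Printing Implicit Defensive.
Import Order.TTheory GRing.Theory Num.Theory.
Local Open Scope ring_scope.

Definition adjmx (R : fieldType) (n : nat) (Rl : rel 'I_n) : 'M[R]_n :=
  \matrix_(x, y) (Rl x y)%:R.

Definition sym_assoc_scheme (R : fieldType) (n d : nat)
    (Rl : 'I_d.+1 -> rel 'I_n) : Prop :=
  (0 < n)%N /\
  [/\ (forall x y, Rl ord0 x y = (x == y)),
      (forall x y, #|[pred i | Rl i x y]| = 1%N),
      (forall i, exists x y, Rl i x y),
      (forall i x y, Rl i x y = Rl i y x)
    & (forall i j, exists p : 'I_d.+1 -> R,
         adjmx R (Rl i) *m adjmx R (Rl j) = \sum_h p h *: adjmx R (Rl h))].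

Definition prim_idempotents (R : fieldType) (n d : nat)
    (Rl : 'I_d.+1 -> rel 'I_n) (E : 'I_d.+1 -> 'M[R]_n) : Prop :=
  [/\ E ord0 = n%:R^-1 *: const_mx 1,
      (forall i j, E i *m E j = if i == j then E i else 0),
      (forall i, E i != 0),
      \sum_i E i = 1%:M
    & (forall i, exists c : 'I_d.+1 -> R, E i = \sum_h c h *: adjmx R (Rl h))].

Definition krein_params (R : fieldType) (n d : nat)
    (E : 'I_d.+1 -> 'M[R]_n) (q : 'I_d.+1 -> 'I_d.+1 -> 'I_d.+1 -> R) : Prop :=
  forall i j, map2_mx *%R (E i) (E j) = n%:R^-1 *: \sum_h q i j h *: E h.

Definition imprimitive (n d : nat) (Rl : 'I_d.+1 -> rel 'I_n) : Prop :=
  exists i : 'I_d.+1, i != ord0 /\ exists x y, ~~ connect (Rl i) x y.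

Definition cometric (R : fieldType) (d : nat)
    (q : 'I_d.+1 -> 'I_d.+1 -> 'I_d.+1 -> R) : Prop :=
  (forall i j h : 'I_d.+1, (i + j < h)%N -> q i j h = 0) /\
  (forall i j h : 'I_d.+1, (i + j)%N = h -> q i j h != 0).

(* a_i^* = q_{1i}^i, b_i^* = q_{1,i+1}^i, c_i^* = q_{1,i-1}^i
   (only used with indices in range) *)
Definition astar (R : fieldType) (d : nat) (q : 'I_d.+1 -> 'I_d.+1 -> 'I_d.+1 -> R)
  (i : nat) : R := q (inord 1) (inord i) (inord i).
Definition bstar (R : fieldType) (d : nat) (q : 'I_d.+1 -> 'I_d.+1 -> 'I_d.+1 -> R)
  (i : nat) : R := q (inord 1) (inord i.+1) (inord i).
Definition cstar (R : fieldType) (d : nat) (q : 'I_d.+1 -> 'I_d.+1 -> 'I_d.+1 -> R)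
  (i : nat) : R := q (inord 1) (inord i.-1) (inord i).

From HB Require Import structures.
From mathcomp Require Import all_boot all_order all_algebra.
From mathcomp Require Import ring lra zify.
Import Order.TTheory GRing.Theory Num.Theory.
Local Open Scope ring_scope.

(* Krein symmetry m_h q_ij^h = m_j q_ih^j turns the cometric vanishing
   condition into q_1j^h = 0 whenever |j - h| > 1, and the row-sum identity
   sum_j q_ij^h = m_i then gives a_h^* + b_h^* + c_h^* = m.  Together with the Krein array these equations
   determine every a_i^* and b_4^* in terms of m, c_2^*, c_5^*; unrolling the
   three-term recurrence to v_7^* leaves an identity of rational functions,
   checked pointwise. *)

Lemma mxtrace_idem (F : fieldType) (n : nat) (A : 'M[F]_n) :
  A *m A = A -> \tr A = (\rank A)%:R.
Proof.
move=> AA; have AE := mulmx_base A.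
have [L LC] := row_fullP (col_base_full A).
have [Rr BR] := row_freeP (row_base_free A).
set C := col_base A in AE LC *; set B := row_base A in AE BR *; clearbody C B.
rewrite -{1}AE mxtrace_mulC; suff -> : B *m C = 1%:M by rewrite mxtrace1.
have CBCB : C *m B *m (C *m B) = C *m B by rewrite AE.
have <- : L *m (C *m B *m (C *m B)) *m Rr = B *m C.
  by rewrite !mulmxA LC mul1mx -!mulmxA BR mulmx1.
by rewrite CBCB mulmxA LC mul1mx BR.
Qed.

Lemma horner_eq_poly (R : numDomainType) (p r : {poly R}) :
  (forall x, p.[x] = r.[x]) -> p = r.
Proof.
move=> eq_pr; apply/eqP; rewrite -subr_eq0; apply/eqP.
apply: (@roots_geq_poly_eq0 _ _ [seq i%:R | i <- iota 0 (size (p - r))]).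
- by apply/allP => _ /mapP[i _ ->]; rewrite /root hornerD hornerN eq_pr subrr.
- by rewrite map_inj_uniq ?iota_uniq // => i j /eqP; rewrite eqr_nat => /eqP.
- by rewrite size_map size_iota.
Qed.

Section KreinParameters.

Context {R : numFieldType} {n d : nat} {Rl : 'I_d.+1 -> rel 'I_n}.
Context {E : 'I_d.+1 -> 'M[R]_n} {q : 'I_d.+1 -> 'I_d.+1 -> 'I_d.+1 -> R}.
Hypothesis scheme : sym_assoc_scheme R Rl.
Hypothesis idem : prim_idempotents Rl E.
Hypothesis krein : krein_params E q.

Let mult i : R := (\rank (E i))%:R.

Lemma natr_size_neq0 : n%:R != 0 :> R.
Proof. by case: scheme => n_gt0 _; rewrite pnatr_eq0 -lt0n. Qed.

Lemma prim_idempotentM i j : E i *m E j = if i == j then E i else 0.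
Proof. by case: idem. Qed.

Lemma prim_idempotent_tr i : (E i)^T = E i.
Proof.
case: idem => _ _ _ _ /(_ i)[coef ->]; case: scheme => _ [_ _ _ Rl_sym _].
apply/matrixP => x y; rewrite !mxE !summxE; apply: eq_bigr => h _.
by rewrite !mxE Rl_sym.
Qed.

Lemma mxtrace_prim_idempotent i : \tr (E i) = mult i.
Proof. by apply: mxtrace_idem; rewrite prim_idempotentM eqxx. Qed.

Lemma mult_neq0 i : mult i != 0.
Proof.
by case: idem => _ _ /(_ i) Ei_neq0 _ _; rewrite pnatr_eq0 mxrank_eq0.
Qed.

Lemma sum_prim_idempotentMr (coef : 'I_d.+1 -> R) k :
  (\sum_h coef h *: E h) *m E k = coef k *: E k.
Proof.
rewrite mulmx_suml (bigD1 k) //= big1 ?addr0 => [|h hk].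
  by rewrite -scalemxAl prim_idempotentM eqxx.
by rewrite -scalemxAl prim_idempotentM (negbTE hk) scaler0.
Qed.

Lemma prim_idempotent_coef_inj (coef coef' : 'I_d.+1 -> R) k :
  \sum_h coef h *: E h = \sum_h coef' h *: E h -> coef k = coef' k.
Proof.
move=> /(congr1 (mulmx^~ (E k))); rewrite !sum_prim_idempotentMr => /eqP.
rewrite -subr_eq0 -scalerBl scaler_eq0 subr_eq0.
by case: idem => _ _ /(_ k)/negbTE-> _ _; rewrite orbF => /eqP.
Qed.

Lemma mxtrace_hadamard_prim_idempotent i j h :
  \tr (map2_mx *%R (E i) (E j) *m E h) = n%:R^-1 * (q i j h * mult h).
Proof.
rewrite krein -scalemxAl sum_prim_idempotentMr !mxtraceZ.
by rewrite mxtrace_prim_idempotent.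
Qed.

(* Both sides are n^-1 times sum_(x,y) (E_i)_xy (E_j)_xy (E_h)_xy. *)
Lemma krein_mult_sym i j h : q i j h * mult h = q i h j * mult j.
Proof.
have triple_sum k l : \tr (map2_mx *%R (E i) (E k) *m E l)
    = \sum_x \sum_y E i x y * E k x y * E l x y.
  rewrite /mxtrace; apply: eq_bigr => x _; rewrite mxE; apply: eq_bigr => y _.
  by rewrite !mxE -[in E l y x](prim_idempotent_tr l) mxE.
apply: (mulfI (invr_neq0 natr_size_neq0)).
rewrite -!mxtrace_hadamard_prim_idempotent !triple_sum.
by apply: eq_bigr => x _; apply: eq_bigr => y _; rewrite mulrAC.
Qed.

Lemma prim_idempotent_diag_const i : exists e0, forall x, E i x x = e0.
Proof.
case: idem => _ _ _ _ /(_ i)[coef ->]; case: scheme => _ [Rl0 Rl_part _ _ _].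
have Rl_diag x h : Rl h x x = (h == ord0).
  have [h0 part] := mem_card1 (Rl_part x x).
  have : ord0 \in [pred h | Rl h x x] by rewrite inE Rl0.
  by rewrite part inE => /eqP ->; have := part h; rewrite !inE.
exists (coef ord0) => x; rewrite summxE (bigD1 ord0) //= big1 ?addr0.
  by rewrite !mxE Rl_diag eqxx mulr1.
by move=> h /negbTE h_neq0; rewrite !mxE Rl_diag h_neq0 mulr0.
Qed.

(* sum_j E_i o E_j = E_i o I is the constant diagonal of E_i times I. *)
Lemma krein_row_sum i h : \sum_j q i j h = mult i.
Proof.
have [e0 diag] := prim_idempotent_diag_const i.
have sumE : \sum_h E h = 1%:M by case: idem.
have hadamard_sum : \sum_j map2_mx *%R (E i) (E j) = \sum_h e0 *: E h.
  rewrite -scaler_sumr sumE; apply/matrixP => x y; rewrite summxE !mxE.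
  under eq_bigr do rewrite mxE.
  rewrite -mulr_sumr -summxE sumE !mxE.
  by case: (eqVneq x y) => [<-|_]; rewrite ?diag ?mulr0.
have krein_sum : \sum_j map2_mx *%R (E i) (E j)
    = \sum_h (n%:R^-1 * \sum_j q i j h) *: E h.
  under eq_bigr do rewrite krein.
  rewrite -scaler_sumr exchange_big /= scaler_sumr; apply: eq_bigr => k _.
  by rewrite -scaler_suml scalerA.
have tr_Ei : mult i = n%:R * e0.
  rewrite -mxtrace_prim_idempotent /mxtrace (eq_bigr _ (fun x _ => diag x)).
  by rewrite sumr_const card_ord mulr_natl.
have := prim_idempotent_coef_inj _ (fun=> e0) h
  (etrans (esym krein_sum) hadamard_sum).
by rewrite tr_Ei => <-; rewrite mulrA divff ?natr_size_neq0 // mul1r.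
Qed.

Hypothesis comet : cometric q.

Lemma cometric_krein_eq0 (i j h : 'I_d.+1) :
  ((i + j < h) || (i + h < j))%N -> q i j h = 0.
Proof.
case: comet => vanish _; case/orP => [/vanish //|/vanish q_ihj].
have := krein_mult_sym i j h; rewrite q_ihj mul0r => /eqP.
by rewrite mulf_eq0 (negbTE (mult_neq0 h)) orbF => /eqP.
Qed.

Lemma cometric_cstar_neq0 k : (0 < k <= d)%N -> cstar q k != 0.
Proof.
by move=> k_range; case: comet => _; apply; rewrite !inordK; lia.
Qed.

Lemma inord_eqE (j : 'I_d.+1) x :
  (x <= d)%N -> (j == inord x) = (j == x :> nat).
Proof. by move=> x_le_d; rewrite -val_eqE /= inordK. Qed.

Lemma cometric_sum_abc k : (0 < k < d)%N ->
  astar q k + bstar q k + cstar q k = mult (inord 1).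
Proof.
move=> k_range; rewrite -(krein_row_sum (inord 1) (inord k)).
rewrite (bigD1 (inord k.-1)) //= (bigD1 (inord k)) /=; last first.
  by rewrite inord_eqE ?inordK; lia.
rewrite (bigD1 (inord k.+1)) /=; last first.
  by rewrite !inord_eqE ?inordK; lia.
rewrite big1 => [|j]; first by rewrite addr0 /astar /bstar /cstar; ring.
rewrite !inord_eqE; [move=> j_far | lia..].
by apply: cometric_krein_eq0; rewrite !inordK; have := ltn_ord j; lia.
Qed.

Lemma cometric_sum_ac : (0 < d)%N -> astar q d + cstar q d = mult (inord 1).
Proof.
move=> d_gt0; rewrite -(krein_row_sum (inord 1) (inord d)).
rewrite (bigD1 (inord d.-1)) //= (bigD1 (inord d)) /=; last first.
  by rewrite inord_eqE ?inordK; lia.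
rewrite big1 => [|j]; first by rewrite addr0 /astar /cstar addrC.
rewrite !inord_eqE; [move=> j_far | lia..].
by apply: cometric_krein_eq0; rewrite !inordK; have := ltn_ord j; lia.
Qed.

End KreinParameters.

Lemma three_term_next {F : fieldType} {x c z a y b w : F} :
  c != 0 -> x * y = c * z + (a * y + b * w) -> z = ((x - a) * y - b * w) / c.
Proof.
move=> c_neq0 rec; apply: (mulIf c_neq0); rewrite divfK // mulrBl rec; ring.
Qed.

Lemma krein_array_v7_factor {R : realFieldType} {m : R} {a b c : nat -> R}
    {v : nat -> {poly R}} :
  m != 0 -> c 2%N != 0 -> c 3%N != 0 -> c 5%N != 0 ->
  b 0%N = m -> b 1%N = m - 1 -> b 2%N = 1 -> b 5%N = 1 ->
  c 1%N = 1 -> c 3%N = m - b 3%N -> c 4%N = 1 -> c 6%N = m ->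
  a 2%N = a 4%N + a 5%N ->
  (forall k, (0 < k < 6)%N -> a k + b k + c k = m) -> a 6%N + c 6%N = m ->
  v 0%N = 1 -> v 1%N = 'X ->
  (forall i : nat, (1 <= i <= 6)%N ->
     'X * v i = (if i == 6%N then 1 else c i.+1) *: v i.+1
                + a i *: v i + b i.-1 *: v i.-1) ->
  (m * c 2%N * c 3%N * c 5%N) *: v 7%N =
    ('X ^+ 3 - a 2%N *: 'X ^+ 2 - (m + c 2%N * (m - 1)) *: 'X
       + (m * a 2%N - a 5%N * c 3%N)%:P)
    * ('X ^+ 2 + c 2%N *: 'X - m%:P) * ('X - m%:P) * ('X + 1).
Proof.
move=> m_neq0 c2_neq0 c3_neq0 c5_neq0 b0 b1 b2 b5 c1 c3 c4 c6 a2.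
move=> sum_abc sum_ac v0 v1 rec.
have s1 := sum_abc 1%N erefl; have s2 := sum_abc 2%N erefl.
have s3 := sum_abc 3%N erefl; have s4 := sum_abc 4%N erefl.
have s5 := sum_abc 5%N erefl.
have ea1 : a 1%N = 0 by lra.
have ea2 : a 2%N = m - 1 - c 2%N by lra.
have ea3 : a 3%N = 0 by lra.
have ea4 : a 4%N = m - b 4%N - 1 by lra.
have ea5 : a 5%N = m - 1 - c 5%N by lra.
have ea6 : a 6%N = 0 by lra.
have eb4 : b 4%N = c 2%N - c 5%N - 1 + m by lra.
apply: horner_eq_poly => x.
have rec_at i : (1 <= i <= 6)%N -> x * (v i).[x] =
    (if i == 6%N then 1 else c i.+1) * (v i.+1).[x]
    + (a i * (v i).[x] + b i.-1 * (v i.-1).[x]).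
  move=> i_range; have e := congr1 (horner^~ x) (rec i i_range).
  by rewrite !hornerE in e; rewrite e addrA.
have c4_neq0 : c 4%N != 0 by rewrite c4 oner_neq0.
have c6_neq0 : c 6%N != 0 by rewrite c6.
have y7 := three_term_next (oner_neq0 R) (rec_at 6%N erefl).
have y6 := three_term_next c6_neq0 (rec_at 5%N erefl).
have y5 := three_term_next c5_neq0 (rec_at 4%N erefl).
have y4 := three_term_next c4_neq0 (rec_at 3%N erefl).
have y3 := three_term_next c3_neq0 (rec_at 2%N erefl).
have y2 := three_term_next c2_neq0 (rec_at 1%N erefl).
rewrite /= in y7 y6 y5 y4 y3 y2.
rewrite !(hornerZ, hornerM, hornerD, hornerN, hornerX, hornerC, hornerXn).
rewrite y7 y6 y5 y4 y3 y2 v1 v0 !(hornerX, hornerC).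
rewrite ea1 ea2 ea3 ea4 ea5 ea6 eb4 b0 b1 b2 b5 c3 c4 c6.
rewrite c3 in c3_neq0; field.
by rewrite c3_neq0 c2_neq0 c5_neq0 m_neq0.
Qed.

Theorem lemma4p1 (R : realFieldType) (n : nat) (Rl : 'I_7 -> rel 'I_n)
    (E : 'I_7 -> 'M[R]_n) (q : 'I_7 -> 'I_7 -> 'I_7 -> R)
    (v : nat -> {poly R}) :
  sym_assoc_scheme R Rl ->
  imprimitive Rl ->
  prim_idempotents Rl E ->
  krein_params E q ->
  cometric q ->
  let m : R := (\rank (E (inord 1)))%:R in
  let a := astar q in let b := bstar q in let c := cstar q in
  (2 < \rank (E (inord 1)))%N ->
  b 0%N = m -> b 1%N = m - 1 -> b 2%N = 1 -> b 5%N = 1 ->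
  c 1%N = 1 -> c 3%N = m - b 3%N -> c 4%N = 1 -> c 6%N = m ->
  a 2%N = a 4%N + a 5%N ->
  v 0%N = 1 -> v 1%N = 'X ->
  (forall i : nat, (1 <= i <= 6)%N ->
     'X * v i = (if i == 6%N then 1 else c i.+1) *: v i.+1
                + a i *: v i + b i.-1 *: v i.-1) ->
  (m * c 2%N * c 3%N * c 5%N) *: v 7%N =
    ('X ^+ 3 - a 2%N *: 'X ^+ 2 - (m + c 2%N * (m - 1)) *: 'X
       + (m * a 2%N - a 5%N * c 3%N)%:P)
    * ('X ^+ 2 + c 2%N *: 'X - m%:P) * ('X - m%:P) * ('X + 1).
Proof.
move=> scheme _ idem krein comet m a b c rank_gt2.
move=> b0 b1 b2 b5 c1 c3 c4 c6 a2 v0 v1 rec.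
have m_neq0 : m != 0 by rewrite pnatr_eq0 -lt0n (leq_trans _ rank_gt2).
have c_neq0 k : (0 < k <= 6)%N -> c k != 0 := cometric_cstar_neq0 comet k.
have sum_abc k : (0 < k < 6)%N -> a k + b k + c k = m.
  exact: (cometric_sum_abc scheme idem krein comet).
have sum_ac : a 6%N + c 6%N = m := cometric_sum_ac scheme idem krein comet isT.
exact: (krein_array_v7_factor m_neq0 (c_neq0 2%N isT) (c_neq0 3%N isT)
  (c_neq0 5%N isT) b0 b1 b2 b5 c1 c3 c4 c6 a2 sum_abc sum_ac v0 v1 rec).
Qed.
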